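(* Let $P_1=(x_1,v_1)$ and $P_2=(x_2,v_2)$ be points of $\mathcal{H}$, let $\theta_i=\delta(x_i,v_i)$ for $i=1,2$, and suppose $0\le\theta_1\le\theta_2<2\pi$ and $1\le v_1\le v_2$. Then $d_H((0,1),P_1)\le d_H((0,1),P_2)$.
   Context: Let $\mathcal{H}=\{(x,v)\in\mathbb{R}^2:v\ge0\}$ and $d_H$ the Riemannian distance on $\mathcal{H}$ induced by $ds^2=v^{-1}(dx^2+dv^2)$ on the open upper half-plane (extended to the boundary). For $v\ge0$, $0<|\delta|<2\pi$, $f(v,\delta)=\frac{(v+1)(\delta-\sin\delta)+2\sqrt v(2\sin\frac\delta2-\delta\cos\frac\delta2)}{2\sin^2\frac\delta2}$, $f(v,0)=0$, and $\delta(x,v)$ denotes the unique $\delta\in(-2\pi,2\pi)$ with $f(v,\delta)=x$. *)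

From Stdlib Require Import Reals Lra ClassicalEpsilon.
From Coquelicot Require Import Coquelicot.
Open Scope R_scope.

Definition f_fun (v d : R) : R :=
  if Req_EM_T d 0 then 0
  else ((v + 1) * (d - sin d)
        + 2 * sqrt v * (2 * sin (d / 2) - d * cos (d / 2)))
       / (2 * (sin (d / 2)) ^ 2).

(* delta(x,v): the unique delta in (-2 pi, 2 pi) with f(v,delta) = x
   (chosen by Hilbert's epsilon; by the paper it is unique). *)
Definition delta (x v : R) : R :=
  epsilon (inhabits 0)
    (fun d => -2 * PI < d < 2 * PI /\ f_fun v d = x).

Definition admissible (gx gv : R -> R) (x1 v1 x2 v2 : R) : Prop :=
  gx 0 = x1 /\ gv 0 = v1 /\ gx 1 = x2 /\ gv 1 = v2 /\
  forall t, 0 <= t <= 1 ->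
    ex_derive gx t /\ ex_derive gv t /\
    continuous (Derive gx) t /\ continuous (Derive gv) t /\
    0 < gv t.

Definition hlength (gx gv : R -> R) : R :=
  RInt (fun t => sqrt ((Derive gx t ^ 2 + Derive gv t ^ 2) / gv t)) 0 1.

Definition dH (x1 v1 x2 v2 : R) : Rbar :=
  Glb_Rbar (fun L => exists gx gv,
    admissible gx gv x1 v1 x2 v2 /\ L = hlength gx gv).

(* For v >= 1 and 0 <= d < 2 PI, the distance from (0, 1) to (f(v, d), v) is
     D(v, d) = d / sin (d / 2) * |1 - sqrt v e^(i d / 2)|,   D(v, 0) = 2 (sqrt v - 1),
   and D is nondecreasing in v and in d; since f(v, delta(x, v)) = x, the claim follows.
   The value D is the length of an explicit cycloid arc. For the lower bound, if a curve
   stays below height h and a^2 h <= 1, the pointwise inequality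
     a x' + sqrt (1 / v - a^2) |v'| <= sqrt ((x'^2 + v'^2) / v)
   integrates to a bound that depends only on the endpoints, a and h. Optimizing over a,
   the optimum being the cosine of the cycloid phase at (0, 1), this bound is at least D. *)

From Stdlib Require Import Reals Lra Ranalysis5 ClassicalEpsilon.
From Coquelicot Require Import Coquelicot.
Open Scope R_scope.

Definition f_formula (v d : R) : R :=
  ((v + 1) * (d - sin d) + 2 * sqrt v * (2 * sin (d / 2) - d * cos (d / 2)))
  / (2 * (sin (d / 2)) ^ 2).

Lemma f_fun_formula v d : d <> 0 -> f_fun v d = f_formula v d.
Proof. intros Hd. unfold f_fun. destruct (Req_EM_T d 0); [lra | reflexivity]. Qed.

Lemma f_fun_0 v : f_fun v 0 = 0.
Proof. unfold f_fun. destruct (Req_EM_T 0 0); [reflexivity | lra]. Qed.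

Lemma f_formula_opp v d : f_formula v (- d) = - f_formula v d.
Proof.
  unfold f_formula. replace (- d / 2) with (- (d / 2)) by field.
  rewrite !sin_neg, cos_neg.
  destruct (Req_dec (sin (d / 2)) 0) as [E | E].
  - rewrite E. unfold Rdiv. replace (2 * (- 0) ^ 2) with 0 by ring.
    replace (2 * 0 ^ 2) with 0 by ring. rewrite Rinv_0. ring.
  - field. exact E.
Qed.

Lemma sin_le_id a : 0 <= a -> sin a <= a.
Proof.
  intros Ha. destruct (Req_dec a 0) as [-> | Ha0].
  - rewrite sin_0; lra.
  - left; apply sin_lt_x; lra.
Qed.

Lemma sin_ge_cubic a : 0 <= a <= 1 -> a - a ^ 3 / 6 <= sin a.
Proof.
  intros Ha. pose proof PI2_3_2. destruct (SIN a) as [Hlb _]; try lra.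
  replace (sin_lb a) with (a - a ^ 3 / 6 + a ^ 5 / 120 - a ^ 7 / 5040) in Hlb
    by (unfold sin_lb, sin_approx, Rtrigo_alt.sin_term; simpl; field).
  assert (0 <= a ^ 5) by (apply pow_le; lra).
  assert (a * a <= 1) by nra.
  assert (a ^ 7 <= a ^ 5) by (replace (a ^ 7) with (a ^ 5 * (a * a)) by ring; nra).
  lra.
Qed.

Lemma cos_ge_quadratic a : 0 <= a <= 1 -> 1 - a ^ 2 / 2 <= cos a.
Proof.
  intros Ha. pose proof PI2_3_2. destruct (COS a) as [Hlb _]; try lra.
  replace (cos_lb a) with (1 - a ^ 2 / 2 + a ^ 4 / 24 - a ^ 6 / 720) in Hlb
    by (unfold cos_lb, cos_approx, Rtrigo_alt.cos_term; simpl; field).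
  assert (0 <= a ^ 4) by (apply pow_le; lra).
  assert (a * a <= 1) by nra.
  assert (a ^ 6 <= a ^ 4) by (replace (a ^ 6) with (a ^ 4 * (a * a)) by ring; nra).
  lra.
Qed.

Lemma div_le_of_num_le_den_ge n d n' d' :
  0 < d' <= d -> n <= n' -> 0 <= n' -> n / d <= n' / d'.
Proof.
  intros Hd Hn Hn'. unfold Rdiv.
  assert (Hi : / d <= / d') by (apply Rinv_le_contravar; lra).
  assert (0 < / d) by (apply Rinv_0_lt_compat; lra).
  destruct (Rle_or_lt n 0); [nra |].
  apply Rle_trans with (n * / d'); [nra |].
  apply Rmult_le_compat_r; [left; apply Rinv_0_lt_compat |]; lra.
Qed.

Lemma f_formula_le_linear v d : 1 <= v -> 0 < d <= 1 ->
  f_formula v d <= 8 * ((v + 1) / 6 + sqrt v / 4) * d.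
Proof.
  intros Hv Hd. unfold f_formula. set (u := d / 2).
  assert (Hu : 0 < u <= 1 / 2) by (unfold u; lra).
  assert (Hsqrt : 0 <= sqrt v) by apply sqrt_pos.
  assert (H1 : d - sin d <= d ^ 3 / 6) by (pose proof (sin_ge_cubic d); lra).
  assert (H2 : 2 * sin u - d * cos u <= d ^ 3 / 8).
  { assert (sin u <= u) by (apply sin_le_id; lra).
    assert (1 - u ^ 2 / 2 <= cos u) by (apply cos_ge_quadratic; lra).
    replace d with (2 * u) by (unfold u; field).
    assert (0 <= u ^ 3) by (apply pow_le; lra). nra. }
  assert (Hsin : u / 2 <= sin u).
  { pose proof (sin_ge_cubic u). assert (u ^ 3 <= u) by nra. nra. }
  replace (8 * ((v + 1) / 6 + sqrt v / 4) * d)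
    with (((v + 1) / 6 + sqrt v / 4) * d ^ 3 / (d ^ 2 / 8)) by (field; lra).
  apply div_le_of_num_le_den_ge.
  - split; [nra |]. replace d with (2 * u) by (unfold u; field). nra.
  - assert ((v + 1) * (d - sin d) <= (v + 1) * (d ^ 3 / 6))
      by (apply Rmult_le_compat_l; lra).
    assert (2 * sqrt v * (2 * sin u - d * cos u) <= 2 * sqrt v * (d ^ 3 / 8))
      by (apply Rmult_le_compat_l; lra).
    lra.
  - apply Rmult_le_pos; [lra | apply pow_le; lra].
Qed.

Lemma f_formula_near_2PI v e : 1 <= v -> 0 < e <= 1 / 2 ->
  2 / e ^ 2 <= f_formula v (2 * PI - 2 * e).
Proof.
  intros Hv He. pose proof PI2_3_2. unfold f_formula.
  replace ((2 * PI - 2 * e) / 2) with (PI - e) by field.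
  rewrite sin_PI_x, Rtrigo_facts.cos_pi_minus.
  replace (sin (2 * PI - 2 * e)) with (- sin (2 * e)).
  2:{ replace (2 * PI - 2 * e) with (- (2 * e) + 2 * INR 1 * PI) by (simpl; ring).
      rewrite sin_period, sin_neg. reflexivity. }
  assert (0 <= sin (2 * e)) by (apply sin_ge_0; lra).
  assert (0 < sin e) by (apply sin_gt_0; lra).
  assert (sin e <= e) by (apply sin_le_id; lra).
  assert (0 <= cos e) by (apply cos_ge_0; lra).
  assert (0 <= sqrt v) by apply sqrt_pos.
  replace (2 / e ^ 2) with (4 / (2 * e ^ 2)) by (field; lra).
  assert (0 <= 2 * sqrt v * (2 * sin e - (2 * PI - 2 * e) * - cos e)).
  { apply Rmult_le_pos; [lra | nra]. }
  assert (4 <= (v + 1) * (2 * PI - 2 * e - - sin (2 * e))) by nra.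
  apply div_le_of_num_le_den_ge; [split; simpl; nra | lra | lra].
Qed.

Lemma continuity_pt_f_formula v d : 0 < d < 2 * PI -> continuity_pt (f_formula v) d.
Proof.
  intros Hd. apply continuity_pt_filterlim, (ex_derive_continuous (f_formula v)).
  unfold f_formula. auto_derive.
  assert (0 < sin (d / 2)) by (apply sin_gt_0; lra).
  simpl. nra.
Qed.

Lemma f_formula_surj v x : 1 <= v -> 0 < x ->
  exists d, 0 < d < 2 * PI /\ f_formula v d = x.
Proof.
  intros Hv Hx. pose proof PI2_3_2.
  set (K := 8 * ((v + 1) / 6 + sqrt v / 4)).
  assert (HK : 0 < K) by (unfold K; pose proof (sqrt_pos v); lra).
  set (d0 := Rmin 1 (x / (K + 1))).
  assert (Hd0 : 0 < d0 <= 1).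
  { split; [apply Rmin_glb_lt; [lra | apply Rdiv_lt_0_compat; lra] | apply Rmin_l]. }
  assert (Hlow : f_formula v d0 < x).
  { apply Rle_lt_trans with (K * d0); [apply f_formula_le_linear; lra |].
    assert (d0 <= x / (K + 1)) by apply Rmin_r.
    apply Rle_lt_trans with (K * (x / (K + 1))); [apply Rmult_le_compat_l; lra |].
    apply Rmult_lt_reg_r with (K + 1); [lra |]. field_simplify; nra. }
  set (e := / (Rabs x + 2)).
  assert (He : 0 < e <= 1 / 2).
  { unfold e. pose proof (Rabs_pos x). split; [apply Rinv_0_lt_compat; lra |].
    replace (1 / 2) with (/ 2) by field. apply Rinv_le_contravar; lra. }
  assert (Hhigh : x < f_formula v (2 * PI - 2 * e)).
  { eapply Rlt_le_trans; [| apply f_formula_near_2PI; lra].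
    replace (2 / e ^ 2) with (2 * (Rabs x + 2) ^ 2)
      by (unfold e; field; pose proof (Rabs_pos x); lra).
    pose proof (Rle_abs x). pose proof (Rabs_pos x). nra. }
  destruct (IVT_interv (fun d => f_formula v d - x) d0 (2 * PI - 2 * e)) as [z [Hz Hfz]].
  - intros y Hy. apply continuity_pt_minus; [apply continuity_pt_f_formula; lra |].
    apply continuity_pt_const. intros ? ?; reflexivity.
  - lra.
  - lra.
  - lra.
  - exists z. split; lra.
Qed.

Lemma f_fun_surj v x : 1 <= v -> exists d, -2 * PI < d < 2 * PI /\ f_fun v d = x.
Proof.
  intros Hv. pose proof PI2_3_2.
  destruct (Rtotal_order x 0) as [Hx | [-> | Hx]].
  - destruct (f_formula_surj v (- x) Hv) as [d [Hd E]]; [lra |].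
    exists (- d). split; [lra |]. rewrite f_fun_formula, f_formula_opp by lra. lra.
  - exists 0. split; [lra | apply f_fun_0].
  - destruct (f_formula_surj v x Hv Hx) as [d [Hd E]].
    exists d. split; [lra |]. rewrite f_fun_formula by lra. exact E.
Qed.

Lemma delta_spec x v : 1 <= v -> f_fun v (delta x v) = x.
Proof.
  intros Hv. unfold delta.
  apply (epsilon_spec (inhabits 0) (fun d => -2 * PI < d < 2 * PI /\ f_fun v d = x)),
    f_fun_surj, Hv.
Qed.

Lemma continuous_of_ex_derive (f : R -> R) x : ex_derive f x -> continuous f x.
Proof. apply (ex_derive_continuous (K := R_AbsRing) (V := R_NormedModule)). Qed.

Lemma continuity_pt_of_ex_derive (f : R -> R) x : ex_derive f x -> continuity_pt f x.
Proof. intros H. apply continuity_pt_filterlim, continuous_of_ex_derive, H. Qed.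

Lemma le_of_derive_nonneg (f df : R -> R) (a b : R) : a <= b ->
  (forall x, a < x < b -> is_derive f x (df x)) ->
  (forall x, a <= x <= b -> continuity_pt f x) ->
  (forall x, a <= x <= b -> 0 <= df x) -> f a <= f b.
Proof.
  intros Hab Hd Hc Hpos.
  destruct (MVT_gen f a b df) as [c [Hc1 Hc2]].
  - intros x Hx. rewrite Rmin_left, Rmax_right in Hx by lra. apply Hd; lra.
  - intros x Hx. rewrite Rmin_left, Rmax_right in Hx by lra. apply Hc; lra.
  - rewrite Rmin_left, Rmax_right in Hc1 by lra.
    assert (0 <= df c * (b - a)) by (apply Rmult_le_pos; [apply Hpos |]; lra). lra.
Qed.

Lemma x_cos_le_sin x : 0 <= x <= PI -> x * cos x <= sin x.
Proof.
  intros Hx.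
  enough (sin 0 - 0 * cos 0 <= sin x - x * cos x) by (rewrite sin_0 in *; lra).
  apply (le_of_derive_nonneg (fun x => sin x - x * cos x) (fun x => x * sin x)); try lra.
  - intros y Hy. auto_derive; auto. ring.
  - intros y Hy. apply continuity_pt_of_ex_derive. auto_derive; auto.
  - intros y Hy. apply Rmult_le_pos; [lra | apply sin_ge_0; lra].
Qed.

Lemma sinc_antimono x1 x2 : 0 < x1 <= x2 -> x2 <= PI -> x1 * sin x2 <= x2 * sin x1.
Proof.
  intros H1 H2.
  assert (- (sin x1 / x1) <= - (sin x2 / x2)).
  { apply (le_of_derive_nonneg (fun x => - (sin x / x))
             (fun x => (sin x - x * cos x) / x ^ 2)); try lra.
    - intros x Hx. auto_derive; [lra |]. field. lra.
    - intros x Hx. apply continuity_pt_of_ex_derive. auto_derive. lra.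
    - intros x Hx. apply Rdiv_le_0_compat; [pose proof (x_cos_le_sin x) |]; nra. }
  assert (sin x2 / x2 * (x1 * x2) <= sin x1 / x1 * (x1 * x2))
    by (apply Rmult_le_compat_r; nra).
  replace (sin x2 / x2 * (x1 * x2)) with (x1 * sin x2) in * by (field; lra).
  replace (sin x1 / x1 * (x1 * x2)) with (x2 * sin x1) in * by (field; lra).
  lra.
Qed.

Lemma sqrt_ge_1 v : 1 <= v -> 1 <= sqrt v.
Proof. intros. rewrite <- sqrt_1. apply sqrt_le_1_alt. lra. Qed.

(* At [d = 0] the ratio is set to its limit 2. *)
Definition half_angle_ratio (d : R) : R :=
  if Req_EM_T d 0 then 2 else d / sin (d / 2).

Definition dH_formula (v d : R) : R :=
  half_angle_ratio d * sqrt (1 + v - 2 * sqrt v * cos (d / 2)).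

Lemma half_angle_ratio_mono d1 d2 : 0 <= d1 <= d2 -> d2 < 2 * PI ->
  2 <= half_angle_ratio d1 <= half_angle_ratio d2.
Proof.
  intros H1 H2. unfold half_angle_ratio.
  assert (Hge2 : forall d, 0 < d < 2 * PI -> 2 <= d / sin (d / 2)).
  { intros d Hd. assert (0 < sin (d / 2)) by (apply sin_gt_0; lra).
    apply Rmult_le_reg_r with (sin (d / 2)); [lra |].
    unfold Rdiv; rewrite Rmult_assoc, Rinv_l by lra.
    pose proof (sin_le_id (d / 2)). lra. }
  destruct (Req_EM_T d1 0), (Req_EM_T d2 0); try lra.
  - split; [lra | apply Hge2; lra].
  - split; [apply Hge2; lra |].
    assert (0 < sin (d1 / 2)) by (apply sin_gt_0; lra).
    assert (0 < sin (d2 / 2)) by (apply sin_gt_0; lra).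
    pose proof (sinc_antimono (d1 / 2) (d2 / 2)).
    apply Rmult_le_reg_r with (sin (d1 / 2) * sin (d2 / 2)); [nra |].
    field_simplify; lra.
Qed.

Lemma chord_mono v1 v2 d1 d2 : 1 <= v1 <= v2 -> 0 <= d1 <= d2 -> d2 < 2 * PI ->
  sqrt (1 + v1 - 2 * sqrt v1 * cos (d1 / 2))
  <= sqrt (1 + v2 - 2 * sqrt v2 * cos (d2 / 2)).
Proof.
  intros Hv Hd Hd2. pose proof PI2_3_2. apply sqrt_le_1_alt.
  assert (Hc : cos (d2 / 2) <= cos (d1 / 2)) by (apply cos_decr_1; lra).
  assert (cos (d1 / 2) <= 1) by apply COS_bound.
  assert (1 <= sqrt v1) by (apply sqrt_ge_1; lra).
  assert (sqrt v1 <= sqrt v2) by (apply sqrt_le_1_alt; lra).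
  rewrite <- (sqrt_sqrt v1), <- (sqrt_sqrt v2) at 1 by lra.
  nra.
Qed.

Lemma dH_formula_mono v1 v2 d1 d2 : 1 <= v1 <= v2 -> 0 <= d1 <= d2 -> d2 < 2 * PI ->
  dH_formula v1 d1 <= dH_formula v2 d2.
Proof.
  intros Hv Hd Hd2. unfold dH_formula.
  pose proof (half_angle_ratio_mono d1 d2 Hd Hd2).
  apply Rmult_le_compat; [lra | apply sqrt_pos | lra | apply chord_mono; lra].
Qed.

Lemma dH_formula_0 v : 1 <= v -> dH_formula v 0 = 2 * (sqrt v - 1).
Proof.
  intros Hv. unfold dH_formula, half_angle_ratio.
  destruct (Req_EM_T 0 0) as [_ | ]; [| lra].
  replace (0 / 2) with 0 by field. rewrite cos_0.
  pose proof (sqrt_ge_1 v Hv).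
  rewrite <- (sqrt_pow2 (sqrt v - 1)) by lra. f_equal. f_equal.
  rewrite <- (sqrt_sqrt v) at 1 by lra. ring.
Qed.

Lemma dH_le_hlength (gx gv : R -> R) (x1 v1 x2 v2 : R) :
  admissible gx gv x1 v1 x2 v2 -> Rbar_le (dH x1 v1 x2 v2) (hlength gx gv).
Proof.
  intros H. apply (Glb_Rbar_correct (fun L => exists gx gv,
    admissible gx gv x1 v1 x2 v2 /\ L = hlength gx gv)). eauto.
Qed.

Lemma admissible_of_derive (gx gv dgx dgv : R -> R) (x1 v1 x2 v2 : R) :
  gx 0 = x1 -> gv 0 = v1 -> gx 1 = x2 -> gv 1 = v2 ->
  (forall t, is_derive gx t (dgx t)) -> (forall t, is_derive gv t (dgv t)) ->
  (forall t, continuous dgx t) -> (forall t, continuous dgv t) ->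
  (forall t, 0 <= t <= 1 -> 0 < gv t) -> admissible gx gv x1 v1 x2 v2.
Proof.
  intros Hx0 Hv0 Hx1 Hv1 Dx Dv Cx Cv Hpos.
  do 4 (split; [assumption |]). intros t Ht.
  repeat split; auto.
  - exists (dgx t). apply Dx.
  - exists (dgv t). apply Dv.
  - apply (continuous_ext dgx); [intros s; symmetry; apply is_derive_unique, Dx | apply Cx].
  - apply (continuous_ext dgv); [intros s; symmetry; apply is_derive_unique, Dv | apply Cv].
Qed.

Lemma hlength_of_speed (gx gv dgx dgv : R -> R) (L : R) :
  (forall t, is_derive gx t (dgx t)) -> (forall t, is_derive gv t (dgv t)) ->
  (forall t, 0 < t < 1 -> sqrt ((dgx t ^ 2 + dgv t ^ 2) / gv t) = L) ->
  hlength gx gv = L.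
Proof.
  intros Dx Dv HL. unfold hlength. rewrite (RInt_ext _ (fun _ => L)).
  - rewrite RInt_const. unfold scal; simpl; unfold mult; simpl. ring.
  - intros t Ht. rewrite Rmin_left, Rmax_right in Ht by lra.
    rewrite (is_derive_unique _ _ _ (Dx t)), (is_derive_unique _ _ _ (Dv t)). apply HL; lra.
Qed.

Lemma dH_le_vertical v : 1 <= v -> Rbar_le (dH 0 1 0 v) (2 * (sqrt v - 1)).
Proof.
  intros Hv. pose proof (sqrt_ge_1 v Hv) as Hr. set (r := sqrt v) in *.
  set (gv := fun t => (1 + t * (r - 1)) ^ 2).
  set (dgv := fun t => 2 * (r - 1) * (1 + t * (r - 1))).
  assert (Dx : forall t, is_derive (fun _ : R => 0) t 0) by (intros; auto_derive; auto).
  assert (Dv : forall t, is_derive gv t (dgv t))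
    by (intros t; unfold gv, dgv; auto_derive; auto; ring).
  rewrite <- (hlength_of_speed (fun _ => 0) gv (fun _ => 0) dgv (2 * (r - 1)) Dx Dv).
  - apply dH_le_hlength, (admissible_of_derive _ _ (fun _ => 0) dgv); auto; intros.
    + unfold gv. ring.
    + unfold gv, r. replace (1 + 1 * (sqrt v - 1)) with (sqrt v) by ring.
      apply pow2_sqrt. lra.
    + apply continuous_const.
    + apply continuous_of_ex_derive. unfold dgv. auto_derive; auto.
    + unfold gv. apply pow_lt. nra.
  - intros t Ht. unfold gv, dgv.
    replace ((0 ^ 2 + (2 * (r - 1) * (1 + t * (r - 1))) ^ 2) / (1 + t * (r - 1)) ^ 2)
      with ((2 * (r - 1)) ^ 2) by (field; nra).
    apply sqrt_pow2; lra.
Qed.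

Lemma continuous_Rmult_fun (f g : R -> R) x :
  continuous f x -> continuous g x -> continuous (fun y => f y * g y) x.
Proof. intros. apply (continuous_mult f g); auto. Qed.

Lemma continuous_Rplus_fun (f g : R -> R) x :
  continuous f x -> continuous g x -> continuous (fun y => f y + g y) x.
Proof. intros. apply (continuous_plus f g); auto. Qed.

Lemma continuous_Rsqr_fun (f : R -> R) x : continuous f x -> continuous (fun y => f y ^ 2) x.
Proof.
  intros. apply (continuous_ext (fun y => f y * f y)); [intros; simpl; ring |].
  apply continuous_Rmult_fun; auto.
Qed.

Lemma ex_RInt_unit_interval (f : R -> R) :
  (forall t, 0 <= t <= 1 -> continuous f t) ->
  forall u w, 0 <= u <= w -> w <= 1 -> ex_RInt f u w.
Proof.
  intros Hf u w Hu Hw. apply (ex_RInt_continuous (V := R_CompleteNormedModule)).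
  intros z Hz. rewrite Rmin_left, Rmax_right in Hz by lra. apply Hf. lra.
Qed.

Definition calib_density (a w : R) : R := sqrt (/ w - a ^ 2).

Lemma continuous_calib_density a w : 0 < w -> continuous (calib_density a) w.
Proof.
  intros Hw. apply (continuous_sqrt_comp (fun w => / w - a ^ 2)).
  apply (continuous_Rplus_fun (fun w => / w) (fun _ => - a ^ 2)).
  - apply continuous_Rinv. lra.
  - apply continuous_const.
Qed.

Lemma ex_RInt_calib_density a w1 w2 : 0 < w1 -> 0 < w2 -> ex_RInt (calib_density a) w1 w2.
Proof.
  intros H1 H2. apply (ex_RInt_continuous (V := R_CompleteNormedModule)).
  intros z Hz. apply continuous_calib_density.
  apply Rlt_le_trans with (Rmin w1 w2); [apply Rmin_glb_lt |]; lra.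
Qed.

(* Cauchy-Schwarz for the vectors (a, k) and (X, |Y|), where a^2 + k^2 = 1 / w. *)
Lemma calib_density_pointwise a X Y w : 0 < w -> 0 <= a -> a ^ 2 * w <= 1 ->
  a * X + calib_density a w * Rabs Y <= sqrt ((X ^ 2 + Y ^ 2) / w).
Proof.
  intros Hw Ha Haw. unfold calib_density.
  assert (Hk : 0 <= / w - a ^ 2).
  { apply (Rmult_le_reg_l w); auto.
    rewrite Rmult_0_r, Rmult_minus_distr_l, Rinv_r by lra. lra. }
  set (k := sqrt (/ w - a ^ 2)).
  assert (Hk2 : k * k = / w - a ^ 2) by (apply sqrt_sqrt; auto).
  assert (Hk0 : 0 <= k) by apply sqrt_pos.
  assert (HY : Rabs Y * Rabs Y = Y ^ 2) by (rewrite <- Rabs_mult, Rabs_right; [ring | nra]).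
  destruct (Rle_dec (a * X + k * Rabs Y) 0); [pose proof (sqrt_pos ((X ^ 2 + Y ^ 2) / w)); lra |].
  rewrite <- (sqrt_pow2 (a * X + k * Rabs Y)) by lra. apply sqrt_le_1_alt.
  replace ((X ^ 2 + Y ^ 2) / w) with ((a ^ 2 + k * k) * (X ^ 2 + Rabs Y * Rabs Y))
    by (rewrite Hk2, HY; field; lra).
  pose proof (pow2_ge_0 (a * Rabs Y - k * X)). nra.
Qed.

Section Calibration.

Variables (gx gv : R -> R) (x1 v1 x2 v2 a : R).
Hypothesis Hadm : admissible gx gv x1 v1 x2 v2.
Hypothesis Ha : 0 <= a.
Hypothesis Hbelow : forall t, 0 <= t <= 1 -> a ^ 2 * gv t <= 1.

Lemma admissible_regular t : 0 <= t <= 1 ->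
  ex_derive gx t /\ ex_derive gv t /\
  continuous (Derive gx) t /\ continuous (Derive gv) t /\ 0 < gv t.
Proof. destruct Hadm as (_ & _ & _ & _ & H). apply H. Qed.

Lemma continuous_calib_along t : 0 <= t <= 1 ->
  continuous (fun s => calib_density a (gv s)) t.
Proof.
  intros Ht. destruct (admissible_regular t Ht) as (_ & Hv & _ & _ & Hpos).
  apply (continuous_comp gv (calib_density a)).
  - apply continuous_of_ex_derive, Hv.
  - apply continuous_calib_density, Hpos.
Qed.

Let kdv s := Derive gv s * calib_density a (gv s).
Let kdv_abs s := calib_density a (gv s) * Rabs (Derive gv s).

Lemma continuous_kdv t : 0 <= t <= 1 -> continuous kdv t.
Proof.
  intros Ht. apply continuous_Rmult_fun; [apply (admissible_regular t Ht) |].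
  apply continuous_calib_along, Ht.
Qed.

Lemma continuous_kdv_abs t : 0 <= t <= 1 -> continuous kdv_abs t.
Proof.
  intros Ht. apply continuous_Rmult_fun; [apply continuous_calib_along, Ht |].
  apply (continuous_Rabs_comp (Derive gv)), (admissible_regular t Ht).
Qed.

Lemma continuous_calib_integrand t : 0 <= t <= 1 ->
  continuous (fun s => a * Derive gx s + kdv_abs s) t.
Proof.
  intros Ht. apply continuous_Rplus_fun; [| apply continuous_kdv_abs, Ht].
  apply continuous_Rmult_fun; [apply continuous_const | apply (admissible_regular t Ht)].
Qed.

Lemma continuous_speed t : 0 <= t <= 1 ->
  continuous (fun s => sqrt ((Derive gx s ^ 2 + Derive gv s ^ 2) / gv s)) t.
Proof.
  intros Ht. destruct (admissible_regular t Ht) as (_ & Hv & Cx & Cv & Hpos).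
  apply (continuous_sqrt_comp (fun s => (Derive gx s ^ 2 + Derive gv s ^ 2) / gv s)).
  apply continuous_Rmult_fun.
  - apply continuous_Rplus_fun; apply continuous_Rsqr_fun; auto.
  - apply continuous_Rinv_comp; [apply continuous_of_ex_derive, Hv | lra].
Qed.

Lemma hlength_ge_calib_integral :
  RInt (fun s => a * Derive gx s + kdv_abs s) 0 1 <= hlength gx gv.
Proof.
  apply RInt_le; try lra.
  - apply ex_RInt_unit_interval; [exact continuous_calib_integrand | lra | lra].
  - apply ex_RInt_unit_interval; [exact continuous_speed | lra | lra].
  - intros t Ht. destruct (admissible_regular t ltac:(lra)) as (_ & _ & _ & _ & Hpos).
    apply calib_density_pointwise; auto. apply Hbelow; lra.
Qed.

Lemma RInt_calib_integrand :
  RInt (fun s => a * Derive gx s + kdv_abs s) 0 1 = a * (x2 - x1) + RInt kdv_abs 0 1.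
Proof.
  assert (Ix : is_RInt (Derive gx) 0 1 (RInt (Derive gx) 0 1)).
  { apply (RInt_correct (V := R_CompleteNormedModule)), ex_RInt_unit_interval; [| lra | lra].
    intros t Ht. apply (admissible_regular t Ht). }
  assert (Ik : is_RInt kdv_abs 0 1 (RInt kdv_abs 0 1)).
  { apply (RInt_correct (V := R_CompleteNormedModule)), ex_RInt_unit_interval; [| lra | lra].
    exact continuous_kdv_abs. }
  destruct Hadm as (Hx0 & _ & Hx1 & _ & _).
  rewrite <- Hx0, <- Hx1, <- RInt_Derive.
  - apply is_RInt_unique. exact (is_RInt_plus _ _ _ _ _ _ (is_RInt_scal _ _ _ a _ Ix) Ik).
  - intros t Ht. rewrite Rmin_left, Rmax_right in Ht by lra. apply (admissible_regular t Ht).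
  - intros t Ht. rewrite Rmin_left, Rmax_right in Ht by lra. apply (admissible_regular t Ht).
Qed.

Lemma RInt_calib_change_var u w : 0 <= u <= w -> w <= 1 ->
  RInt kdv u w = RInt (calib_density a) (gv u) (gv w).
Proof.
  intros Hu Hw. rewrite <- (RInt_comp (V := R_CompleteNormedModule) _ gv (Derive gv)).
  - apply RInt_ext. intros; unfold kdv, scal; simpl; unfold mult; simpl; ring.
  - intros x Hx. rewrite Rmin_left, Rmax_right in Hx by lra.
    apply continuous_calib_density, (admissible_regular x); lra.
  - intros x Hx. rewrite Rmin_left, Rmax_right in Hx by lra.
    destruct (admissible_regular x ltac:(lra)) as (_ & Hv & _ & Cv & _).
    split; [apply Derive_correct |]; assumption.
Qed.

(* Bound |v'| below by v' on [0, tm] and by - v' on [tm, 1], then substitute w = gv s. *)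
Lemma RInt_kdv_abs_ge tm : 0 <= tm <= 1 ->
  RInt (calib_density a) v1 (gv tm) + RInt (calib_density a) v2 (gv tm) <= RInt kdv_abs 0 1.
Proof.
  intros Htm. destruct Hadm as (_ & Hv0 & _ & Hv1 & _).
  assert (Hpos : forall t, 0 <= t <= 1 -> 0 < gv t)
    by (intros t Ht; apply (admissible_regular t Ht)).
  assert (Hkdv : forall u w, 0 <= u <= w -> w <= 1 -> ex_RInt kdv u w)
    by (apply ex_RInt_unit_interval, continuous_kdv).
  assert (Hkdv_abs : forall u w, 0 <= u <= w -> w <= 1 -> ex_RInt kdv_abs u w)
    by (apply ex_RInt_unit_interval, continuous_kdv_abs).
  assert (Hup : RInt (calib_density a) v1 (gv tm) <= RInt kdv_abs 0 tm).
  { rewrite <- Hv0, <- RInt_calib_change_var by lra.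
    apply RInt_le; [lra | apply Hkdv; lra | apply Hkdv_abs; lra |].
    intros t Ht. unfold kdv, kdv_abs. rewrite Rmult_comm.
    apply Rmult_le_compat_l; [apply sqrt_pos | apply Rle_abs]. }
  assert (Hdown : RInt (calib_density a) v2 (gv tm) <= RInt kdv_abs tm 1).
  { rewrite <- Hv1, <- opp_RInt_swap by (apply ex_RInt_calib_density; apply Hpos; lra).
    rewrite <- RInt_calib_change_var by lra. rewrite <- RInt_opp by (apply Hkdv; lra).
    apply RInt_le; [lra | | apply Hkdv_abs; lra |].
    { exact (ex_RInt_opp kdv tm 1 (Hkdv tm 1 ltac:(lra) ltac:(lra))). }
    intros t Ht. change (opp (kdv t)) with (- kdv t). unfold kdv, kdv_abs.
    rewrite <- Rabs_Ropp.
    replace (- (Derive gv t * calib_density a (gv t)))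
      with (calib_density a (gv t) * - Derive gv t) by ring.
    apply Rmult_le_compat_l; [apply sqrt_pos | apply Rle_abs]. }
  replace (RInt kdv_abs 0 1) with (RInt kdv_abs 0 tm + RInt kdv_abs tm 1).
  - lra.
  - apply (RInt_Chasles kdv_abs); apply Hkdv_abs; lra.
Qed.

Lemma hlength_ge_calibration tm : 0 <= tm <= 1 ->
  a * (x2 - x1) + RInt (calib_density a) v1 (gv tm) + RInt (calib_density a) v2 (gv tm)
  <= hlength gx gv.
Proof.
  intros Htm. pose proof hlength_ge_calib_integral. pose proof (RInt_kdv_abs_ge tm Htm).
  rewrite RInt_calib_integrand in *. lra.
Qed.

End Calibration.

Lemma sqrt_one_minus_sq s : -1 <= s <= 1 -> sqrt (1 - s ^ 2) = cos (asin s).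
Proof. intros Hs. rewrite cos_asin by lra. unfold Rsqr. f_equal. ring. Qed.

Lemma asin_pos s : 0 < s <= 1 -> 0 < asin s <= PI / 2.
Proof.
  intros Hs. pose proof (asin_bound s). split; [| lra].
  destruct (Rle_lt_dec (asin s) 0) as [H0 | H0]; auto.
  assert (H1 : sin (asin s) <= sin 0) by (apply sin_incr_1; lra).
  rewrite sin_asin, sin_0 in H1 by lra. lra.
Qed.

Lemma asin_ge_1 y : 1 <= y -> asin y = PI / 2.
Proof.
  intros H. unfold asin.
  destruct (Rle_dec y (-1)); [lra |]. destruct (Rle_dec 1 y); [reflexivity | lra].
Qed.

Lemma asin_le_compat s1 s2 : 0 <= s1 <= s2 -> s2 <= 1 -> asin s1 <= asin s2.
Proof.
  intros H1 H2. pose proof (asin_bound s1). pose proof (asin_bound s2).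
  apply sin_incr_0; try lra. rewrite !sin_asin; lra.
Qed.

Lemma asin_complement x : 0 <= x <= 1 -> asin x + asin (sqrt (1 - x ^ 2)) = PI / 2.
Proof.
  intros Hx. pose proof (asin_bound x).
  assert (0 <= asin x) by (rewrite <- asin_0; apply asin_le_compat; lra).
  rewrite sqrt_one_minus_sq, <- sin_shift, asin_sin by lra. ring.
Qed.

(* Near 1, [asin y = PI/2 - asin (sqrt (max 0 (1 - y^2)))], a composite of
   functions continuous at the relevant points. *)
Lemma continuity_pt_asin_1 : continuity_pt asin 1.
Proof.
  set (m := fun y => (1 - y ^ 2 + Rabs (1 - y ^ 2)) / 2).
  assert (Hm1 : m 1 = 0)
    by (unfold m; replace (1 - 1 ^ 2) with 0 by ring; rewrite Rabs_R0; field).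
  apply (continuity_pt_locally_ext (fun y => PI / 2 - asin (sqrt (m y))) asin 1 1); [lra | |].
  - intros y Hy. unfold Rdist in Hy. apply Rabs_def2 in Hy. unfold m.
    destruct (Rle_dec y 1).
    + rewrite Rabs_right by nra.
      replace ((1 - y ^ 2 + (1 - y ^ 2)) / 2) with (1 - y ^ 2) by field.
      pose proof (asin_complement y). lra.
    + rewrite Rabs_left by nra.
      replace ((1 - y ^ 2 + - (1 - y ^ 2)) / 2) with 0 by field.
      rewrite sqrt_0, asin_0, asin_ge_1 by lra. ring.
  - apply continuity_pt_minus; [apply continuity_pt_const; intros ? ?; reflexivity |].
    apply (continuity_pt_comp (fun y => sqrt (m y)) asin).
    + apply (continuity_pt_comp m sqrt).
      * apply continuity_pt_filterlim.
        apply (continuous_Rmult_fun (fun y => 1 - y ^ 2 + Rabs (1 - y ^ 2)) (fun _ => / 2));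
          [| apply continuous_const].
        apply (continuous_Rplus_fun (fun y => 1 - y ^ 2) (fun y => Rabs (1 - y ^ 2))).
        -- apply continuous_of_ex_derive. auto_derive. auto.
        -- apply (continuous_Rabs_comp (fun y => 1 - y ^ 2)).
           apply continuous_of_ex_derive. auto_derive. auto.
      * rewrite Hm1. apply continuity_pt_sqrt. lra.
    + rewrite Hm1, sqrt_0. apply derivable_continuous_pt, derivable_pt_asin. lra.
Qed.

Lemma is_derive_asin s : -1 < s < 1 -> is_derive asin s (1 / sqrt (1 - s ^ 2)).
Proof.
  intros H. apply is_derive_Reals.
  pose proof (derive_pt_asin s H) as E. unfold derive_pt in E.
  destruct (derivable_pt_asin s H) as [l Hl]. simpl in E. subst l.
  unfold Rsqr in Hl. replace (s ^ 2) with (s * s) by ring. exact Hl.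
Qed.

(* With s = sin y, Bplus s = y + sin y cos y and Bminus s = y - sin y cos y. *)
Definition Bplus (s : R) : R := asin s + s * sqrt (1 - s ^ 2).
Definition Bminus (s : R) : R := asin s - s * sqrt (1 - s ^ 2).

Lemma Bplus_asin s : -1 <= s <= 1 -> Bplus s = asin s + sin (asin s) * cos (asin s).
Proof. intros Hs. unfold Bplus. rewrite sqrt_one_minus_sq, sin_asin by lra. reflexivity. Qed.

Lemma Bminus_asin s : -1 <= s <= 1 -> Bminus s = asin s - sin (asin s) * cos (asin s).
Proof. intros Hs. unfold Bminus. rewrite sqrt_one_minus_sq, sin_asin by lra. reflexivity. Qed.

Lemma continuity_pt_Bplus s : 0 <= s <= 1 -> continuity_pt Bplus s.
Proof.
  intros H. unfold Bplus. apply continuity_pt_plus.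
  - destruct (Req_dec s 1) as [-> |]; [apply continuity_pt_asin_1 |].
    apply derivable_continuous_pt, derivable_pt_asin. lra.
  - apply continuity_pt_filterlim.
    apply (continuous_Rmult_fun (fun s => s) (fun s => sqrt (1 - s ^ 2))); [apply continuous_id |].
    apply (continuous_sqrt_comp (fun s => 1 - s ^ 2)).
    apply continuous_of_ex_derive. auto_derive. auto.
Qed.

Lemma is_derive_Bplus s : -1 < s < 1 -> is_derive Bplus s (2 * sqrt (1 - s ^ 2)).
Proof.
  intros H. assert (Hp : 0 < 1 - s ^ 2) by nra.
  assert (Hq : 0 < sqrt (1 - s ^ 2)) by (apply sqrt_lt_R0; auto).
  assert (Hqq : sqrt (1 - s ^ 2) * sqrt (1 - s ^ 2) = 1 - s ^ 2) by (apply sqrt_sqrt; lra).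
  replace (2 * sqrt (1 - s ^ 2))
    with (1 / sqrt (1 - s ^ 2) + (sqrt (1 - s ^ 2) - s ^ 2 / sqrt (1 - s ^ 2)))
    by (apply (Rmult_eq_reg_r (sqrt (1 - s ^ 2))); [field_simplify |]; lra).
  apply (is_derive_plus asin (fun s => s * sqrt (1 - s ^ 2))); [apply is_derive_asin; auto |].
  auto_derive; [lra |]. replace (1 + - (s * (s * 1))) with (1 - s ^ 2) by ring. field. lra.
Qed.

Lemma Bplus_cos t : 0 <= t <= PI / 2 -> Bplus (cos t) = PI / 2 - t + cos t * sin t.
Proof.
  intros H. pose proof (COS_bound t).
  rewrite Bplus_asin, <- sin_shift, asin_sin, cos_shift, sin_shift by lra. ring.
Qed.

Lemma Bminus_cos t : 0 <= t <= PI / 2 -> Bminus (cos t) = PI / 2 - t - cos t * sin t.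
Proof.
  intros H. pose proof (COS_bound t).
  rewrite Bminus_asin, <- sin_shift, asin_sin, cos_shift, sin_shift by lra. ring.
Qed.

Lemma Bplus_1 : Bplus 1 = PI / 2.
Proof. rewrite <- cos_0, Bplus_cos by (pose proof PI2_RGT_0; lra). rewrite sin_0. ring. Qed.

Lemma Bminus_le_compat s1 s2 : 0 <= s1 <= s2 -> s2 <= 1 -> Bminus s1 <= Bminus s2.
Proof.
  intros H1 H2. rewrite !Bminus_asin by lra.
  pose proof (asin_bound s2).
  assert (0 <= asin s1) by (rewrite <- asin_0; apply asin_le_compat; lra).
  assert (asin s1 <= asin s2) by (apply asin_le_compat; lra).
  apply (le_of_derive_nonneg (fun t => t - sin t * cos t) (fun t => 2 * sin t ^ 2)); try lra.
  - intros x Hx. auto_derive; [auto |]. pose proof (sin2_cos2 x). unfold Rsqr in *. nra.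
  - intros x Hx. apply continuity_pt_of_ex_derive. auto_derive. auto.
  - intros x Hx. pose proof (pow2_ge_0 (sin x)). lra.
Qed.

Lemma Bminus_le_PI2 s : 0 <= s <= 1 -> Bminus s <= PI / 2.
Proof.
  intros H. unfold Bminus. pose proof (asin_bound s).
  assert (0 <= s * sqrt (1 - s ^ 2)) by (apply Rmult_le_pos; [lra | apply sqrt_pos]). lra.
Qed.

Lemma calib_density_sin a y : 0 < a -> 0 < y <= PI / 2 ->
  calib_density a (sin y ^ 2 / a ^ 2) = a * cos y / sin y.
Proof.
  intros Ha Hy.
  assert (Hsy : 0 < sin y) by (apply sin_gt_0; pose proof PI2_Rlt_PI; lra).
  assert (Hcy : 0 <= cos y) by (apply cos_ge_0; lra).
  assert (Hsc := sin2_cos2 y). unfold Rsqr in Hsc.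
  assert (E : (a * cos y / sin y) ^ 2 = / (sin y ^ 2 / a ^ 2) - a ^ 2).
  { replace ((a * cos y / sin y) ^ 2) with (a ^ 2 * cos y ^ 2 / sin y ^ 2) by (field; lra).
    replace (cos y ^ 2) with (1 - sin y ^ 2) by nra. field. lra. }
  unfold calib_density. rewrite <- E. apply sqrt_pow2.
  apply Rdiv_le_0_compat; [apply Rmult_le_pos |]; lra.
Qed.

Lemma mul_sqrt_le_1 a w : 0 < a -> 0 < w -> a ^ 2 * w <= 1 -> 0 < a * sqrt w <= 1.
Proof.
  intros Ha Hw Haw. assert (0 < sqrt w) by (apply sqrt_lt_R0; lra).
  split; [nra |]. apply Rsqr_incr_0_var; [| lra]. unfold Rsqr.
  replace (a * sqrt w * (a * sqrt w)) with (a ^ 2 * (sqrt w * sqrt w)) by ring.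
  rewrite sqrt_sqrt; lra.
Qed.

(* Substituting w = sin^2 y / a^2 turns the density into 2 cos^2 y / a. *)
Lemma RInt_calib_density a w1 w2 : 0 < a -> 0 < w1 -> 0 < w2 ->
  a ^ 2 * w1 <= 1 -> a ^ 2 * w2 <= 1 ->
  RInt (calib_density a) w1 w2 = (Bplus (a * sqrt w2) - Bplus (a * sqrt w1)) / a.
Proof.
  intros Ha Hw1 Hw2 H1 H2.
  pose proof (mul_sqrt_le_1 a w1 Ha Hw1 H1). pose proof (mul_sqrt_le_1 a w2 Ha Hw2 H2).
  set (p1 := asin (a * sqrt w1)). set (p2 := asin (a * sqrt w2)).
  assert (Hp1 : 0 < p1 <= PI / 2) by (apply asin_pos; lra).
  assert (Hp2 : 0 < p2 <= PI / 2) by (apply asin_pos; lra).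
  set (g := fun y => sin y ^ 2 / a ^ 2).
  assert (Hg : forall w, 0 < w -> a ^ 2 * w <= 1 -> g (asin (a * sqrt w)) = w).
  { intros w Hw Hw'. unfold g.
    rewrite sin_asin by (pose proof (mul_sqrt_le_1 a w Ha Hw Hw'); lra).
    replace ((a * sqrt w) ^ 2) with (a ^ 2 * (sqrt w * sqrt w)) by ring.
    rewrite sqrt_sqrt by lra. field. lra. }
  assert (Hin : forall y, Rmin p1 p2 <= y <= Rmax p1 p2 -> 0 < y <= PI / 2).
  { intros y Hy. split.
    - apply Rlt_le_trans with (Rmin p1 p2); [apply Rmin_glb_lt |]; lra.
    - apply Rle_trans with (Rmax p1 p2); [| apply Rmax_lub]; lra. }
  replace (RInt (calib_density a) w1 w2) with (RInt (calib_density a) (g p1) (g p2))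
    by (unfold p1, p2; rewrite !Hg; auto).
  rewrite <- (RInt_comp (V := R_CompleteNormedModule) _ g (fun y => 2 * sin y * cos y / a ^ 2)).
  - rewrite (RInt_ext _ (fun y => 2 * cos y ^ 2 / a)).
    + erewrite is_RInt_unique.
      2:{ apply (is_RInt_derive (fun y => (y + sin y * cos y) / a)).
          - intros y Hy. auto_derive; [easy |].
            pose proof (sin2_cos2 y) as Hsc. unfold Rsqr in Hsc.
            replace (sin y * (1 * - sin y)) with (cos y * cos y - 1) by lra. field. lra.
          - intros y Hy. apply continuous_of_ex_derive. auto_derive. lra. }
      unfold minus, plus, opp; simpl. rewrite !Bplus_asin by lra. fold p1 p2. field. lra.
    + intros y Hy. assert (Hy' : 0 < y <= PI / 2) by (apply Hin; lra).
      unfold scal; simpl; unfold mult; simpl. unfold g.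
      rewrite calib_density_sin by lra.
      assert (0 < sin y) by (apply sin_gt_0; lra).
      field. lra.
  - intros y Hy. apply continuous_calib_density. unfold g.
    assert (0 < sin y) by (apply sin_gt_0; pose proof (Hin y Hy); lra).
    apply Rdiv_lt_0_compat; apply pow_lt; lra.
  - intros y Hy. split.
    + unfold g. auto_derive; [lra | field; lra].
    + apply continuous_of_ex_derive. auto_derive. lra.
Qed.

Lemma RInt_calib_density_0 w1 w2 : 0 < w1 -> 0 < w2 ->
  RInt (calib_density 0) w1 w2 = 2 * sqrt w2 - 2 * sqrt w1.
Proof.
  intros H1 H2.
  assert (Hin : forall y, Rmin w1 w2 <= y <= Rmax w1 w2 -> 0 < y).
  { intros y Hy. apply Rlt_le_trans with (Rmin w1 w2); [apply Rmin_glb_lt |]; lra. }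
  erewrite is_RInt_unique.
  2:{ apply (is_RInt_derive (fun y => 2 * sqrt y)).
      - intros y Hy. specialize (Hin y Hy). auto_derive; [lra |]. unfold calib_density.
        replace (/ y - 0 ^ 2) with (/ y) by ring. rewrite sqrt_inv.
        field. apply Rgt_not_eq, sqrt_lt_R0. lra.
      - intros y Hy. apply continuous_calib_density, Hin, Hy. }
  unfold minus, plus, opp; simpl. ring.
Qed.

(* [calib_value x r a] is the calibration bound for curves from (0, 1) to (x, r^2)
   whose height stays below 1 / a^2; [calib_crit r a] is where its derivative in [a] vanishes. *)
Definition calib_value (x r a : R) : R := a * x + (PI - Bplus a - Bplus (a * r)) / a.
Definition calib_crit (r a : R) : R := (PI - Bminus a - Bminus (a * r)) / a ^ 2.

Lemma calib_crit_antimono r s1 s2 : 1 <= r -> 0 < s1 <= s2 -> s2 * r <= 1 ->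
  calib_crit r s2 <= calib_crit r s1.
Proof.
  intros Hr H1 H2. unfold calib_crit.
  assert (Bminus s1 <= Bminus s2) by (apply Bminus_le_compat; nra).
  assert (Bminus (s1 * r) <= Bminus (s2 * r)) by (apply Bminus_le_compat; nra).
  assert (Bminus s2 <= PI / 2) by (apply Bminus_le_PI2; nra).
  assert (Bminus (s2 * r) <= PI / 2) by (apply Bminus_le_PI2; nra).
  apply Rle_trans with ((PI - Bminus s2 - Bminus (s2 * r)) / s1 ^ 2); unfold Rdiv.
  - apply Rmult_le_compat_l; [lra |].
    apply Rinv_le_contravar; [apply pow_lt; lra | apply pow_incr; lra].
  - apply Rmult_le_compat_r; [apply Rlt_le, Rinv_0_lt_compat, pow_lt |]; lra.
Qed.

Lemma is_derive_calib_value x r a : 1 <= r -> 0 < a -> a * r < 1 ->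
  is_derive (calib_value x r) a (x - calib_crit r a).
Proof.
  intros Hr Ha Har. assert (a < 1) by nra.
  pose proof (is_derive_Bplus a ltac:(lra)) as D1.
  assert (D2 : is_derive (fun a => Bplus (a * r)) a (r * (2 * sqrt (1 - (a * r) ^ 2)))).
  { apply (is_derive_comp Bplus (fun a => a * r)); [apply is_derive_Bplus; nra |].
    auto_derive; auto. ring. }
  assert (D3 : is_derive (fun a => (PI - Bplus a - Bplus (a * r)) / a) a
      (((0 - 2 * sqrt (1 - a ^ 2) - r * (2 * sqrt (1 - (a * r) ^ 2))) * a
        - (PI - Bplus a - Bplus (a * r)) * 1) / a ^ 2)).
  { apply (is_derive_div (fun a => PI - Bplus a - Bplus (a * r)) (fun a => a));
      [| auto_derive; auto | lra].
    apply (is_derive_minus (fun a => PI - Bplus a)); [| exact D2].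
    apply (is_derive_minus (fun _ => PI)); [auto_derive; auto | exact D1]. }
  replace (x - calib_crit r a) with (x * 1 +
    ((0 - 2 * sqrt (1 - a ^ 2) - r * (2 * sqrt (1 - (a * r) ^ 2))) * a
     - (PI - Bplus a - Bplus (a * r)) * 1) / a ^ 2)
    by (unfold calib_crit, Bminus, Bplus; field; lra).
  apply (is_derive_plus (fun a => a * x)); [| exact D3].
  auto_derive; auto. ring.
Qed.

Lemma continuity_pt_calib_value x r a : 1 <= r -> 0 < a -> a * r <= 1 ->
  continuity_pt (calib_value x r) a.
Proof.
  intros Hr Ha Har. assert (a <= 1) by nra. unfold calib_value.
  apply continuity_pt_plus.
  - apply continuity_pt_of_ex_derive. auto_derive. auto.
  - apply continuity_pt_div; [| apply derivable_continuous_pt, derivable_pt_id | lra].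
    apply continuity_pt_minus; [apply continuity_pt_minus |].
    + apply continuity_pt_const. intros ? ?; reflexivity.
    + apply continuity_pt_Bplus. lra.
    + apply (continuity_pt_comp (fun a => a * r) Bplus).
      * apply continuity_pt_of_ex_derive. auto_derive. auto.
      * apply continuity_pt_Bplus. nra.
Qed.

Lemma calib_value_ge x r c a : 1 <= r -> 0 < a -> 0 < c -> a * r <= 1 -> c * r <= 1 ->
  (a <= c -> x <= calib_crit r c) -> (c < a -> calib_crit r c <= x) ->
  calib_value x r c <= calib_value x r a.
Proof.
  intros Hr Ha Hc Har Hcr Hleft Hright. destruct (Rle_dec a c) as [Hac | Hca].
  - enough (- calib_value x r a <= - calib_value x r c) by lra.
    apply (le_of_derive_nonneg (fun t => - calib_value x r t) (fun t => calib_crit r t - x)); auto.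
    + intros t Ht. replace (calib_crit r t - x) with (- (x - calib_crit r t)) by ring.
      apply (is_derive_opp (calib_value x r)), is_derive_calib_value; nra.
    + intros t Ht. apply continuity_pt_opp, continuity_pt_calib_value; nra.
    + intros t Ht. pose proof (calib_crit_antimono r t c). pose proof (Hleft Hac). nra.
  - apply (le_of_derive_nonneg (calib_value x r) (fun t => x - calib_crit r t)); [lra | | |].
    + intros t Ht. apply is_derive_calib_value; nra.
    + intros t Ht. apply continuity_pt_calib_value; nra.
    + intros t Ht. pose proof (calib_crit_antimono r c t). pose proof (Hright ltac:(lra)). nra.
Qed.

Lemma curve_height_max gv : (forall t, 0 <= t <= 1 -> ex_derive gv t) ->
  exists tm, 0 <= tm <= 1 /\ forall t, 0 <= t <= 1 -> gv t <= gv tm.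
Proof.
  intros H. destruct (continuity_ab_maj gv 0 1) as [tm [Hmax Htm]]; [lra | |].
  - intros t Ht. apply continuity_pt_of_ex_derive, H, Ht.
  - exists tm. auto.
Qed.

Lemma hlength_ge_calib_value gx gv x v tm :
  admissible gx gv 0 1 x v -> 0 <= tm <= 1 -> (forall t, 0 <= t <= 1 -> gv t <= gv tm) ->
  calib_value x (sqrt v) (1 / sqrt (gv tm)) <= hlength gx gv.
Proof.
  intros Hadm Htm Hmax. pose proof Hadm as (_ & Hv0 & _ & Hv1 & _).
  set (h := gv tm) in *.
  assert (Hv : 0 < v) by (rewrite <- Hv1; apply (admissible_regular gx gv 0 1 x v Hadm); lra).
  assert (Hh1 : 1 <= h) by (rewrite <- Hv0; apply Hmax; lra).
  assert (Hhv : v <= h) by (rewrite <- Hv1; apply Hmax; lra).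
  assert (Hsh : 0 < sqrt h) by (apply sqrt_lt_R0; lra).
  assert (Hshh : sqrt h * sqrt h = h) by (apply sqrt_sqrt; lra).
  set (a := 1 / sqrt h).
  assert (Ha : 0 < a) by (unfold a; apply Rdiv_lt_0_compat; lra).
  assert (Hah : a ^ 2 * h = 1).
  { unfold a. replace ((1 / sqrt h) ^ 2 * h) with (h / (sqrt h * sqrt h)) by (field; lra).
    rewrite Hshh. field. lra. }
  assert (Hbelow : forall t, 0 <= t <= 1 -> a ^ 2 * gv t <= 1)
    by (intros t Ht; rewrite <- Hah; apply Rmult_le_compat_l; [nra | apply Hmax, Ht]).
  pose proof (hlength_ge_calibration gx gv 0 1 x v a Hadm ltac:(lra) Hbelow tm Htm) as C.
  fold h in C.
  rewrite (RInt_calib_density a 1 h), (RInt_calib_density a v h) in C by nra.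
  replace (a * sqrt h) with 1 in C by (unfold a; field; lra).
  rewrite sqrt_1, Rmult_1_r, Bplus_1 in C.
  unfold calib_value. fold a.
  replace (a * x + (PI - Bplus a - Bplus (a * sqrt v)) / a)
    with (a * (x - 0) + (PI / 2 - Bplus a) / a + (PI / 2 - Bplus (a * sqrt v)) / a)
    by (field; lra).
  exact C.
Qed.

Section Geodesic.

Variables v d : R.
Hypothesis Hv : 1 <= v.
Hypothesis Hd : 0 < d < 2 * PI.

(* The geodesic from (0, 1) to (f v d, v) is an arc of the cycloid
   (x, v) = ((2 s + sin (2 al) - sin (2 (al - s))) / (2 c^2), cos (al - s)^2 / c^2),
   s in [0, b], traversed with constant speed 2 b / c; [al] is chosen so that the arc ends
   at height v (see [cos_al_b]). *)
Let b := d / 2.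
Let T := (sqrt v - cos b) / sin b.
Let al := atan T.
Let c := cos al.

Lemma sin_b_pos : 0 < sin b.
Proof. apply sin_gt_0; unfold b; lra. Qed.

Lemma sqrt_v_ge_1 : 1 <= sqrt v.
Proof. apply sqrt_ge_1, Hv. Qed.

Lemma sqrt_v_sqr : sqrt v ^ 2 = v.
Proof. apply pow2_sqrt. lra. Qed.

Lemma T_nonneg : 0 <= T.
Proof.
  pose proof sin_b_pos. pose proof sqrt_v_ge_1. pose proof (COS_bound b).
  apply Rdiv_le_0_compat; lra.
Qed.

Lemma al_range : 0 <= al < PI / 2.
Proof.
  pose proof (atan_bound T). split; [| unfold al; lra].
  rewrite <- atan_0. destruct T_nonneg as [HT | HT].
  - left. apply atan_increasing, HT.
  - unfold al. rewrite <- HT. lra.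
Qed.

Lemma c_pos : 0 < c.
Proof. pose proof al_range. apply cos_gt_0; lra. Qed.

Lemma inv_c_sqr : / c ^ 2 = 1 + T ^ 2.
Proof.
  unfold c, al. rewrite cos_atan. unfold Rsqr.
  assert (0 < 1 + T * T) by nra.
  assert (Hs : 0 < sqrt (1 + T * T)) by (apply sqrt_lt_R0; lra).
  replace ((1 / sqrt (1 + T * T)) ^ 2) with (/ (sqrt (1 + T * T) * sqrt (1 + T * T)))
    by (field; lra).
  rewrite sqrt_sqrt, Rinv_inv by lra. ring.
Qed.

Lemma sin_al : sin al = T * c.
Proof.
  unfold c, al. rewrite sin_atan, cos_atan. field.
  apply Rgt_not_eq, sqrt_lt_R0. unfold Rsqr. nra.
Qed.

Lemma T_sin_b : T * sin b = sqrt v - cos b.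
Proof. pose proof sin_b_pos. unfold T. field. lra. Qed.

Lemma cos_al_b : cos (al - b) = c * sqrt v.
Proof.
  rewrite cos_minus, sin_al. fold c.
  replace (sqrt v) with (T * sin b + cos b) by (rewrite T_sin_b; ring). ring.
Qed.

Lemma al_b_range : - (PI / 2) < al - b < PI / 2.
Proof.
  pose proof al_range. pose proof c_pos. pose proof sqrt_v_ge_1.
  split; [| unfold b; lra].
  destruct (Rle_lt_dec (al - b) (- (PI / 2))) as [Hlow | Hlow]; [exfalso | lra].
  assert (cos (b - al) <= 0) by (apply cos_le_0; unfold b in *; lra).
  replace (b - al) with (- (al - b)) in * by ring. rewrite cos_neg, cos_al_b in *. nra.
Qed.

Lemma f_formula_geodesic :
  f_formula v d = (b + sin al * c - sin (al - b) * cos (al - b)) / c ^ 2.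
Proof.
  pose proof sin_b_pos. pose proof c_pos.
  pose proof (sin2_cos2 b) as Hp. unfold Rsqr in Hp.
  unfold f_formula. fold b. replace d with (2 * b) by (unfold b; field).
  replace (v + 1) with (sqrt v ^ 2 + 1) by (rewrite sqrt_v_sqr; ring).
  rewrite sin_2a, sin_minus, cos_minus, sin_al. fold c.
  replace (sqrt v) with (T * sin b + cos b) by (rewrite T_sin_b; ring).
  set (r := T * sin b + cos b).
  assert (Hnum : b * (1 + r ^ 2 - 2 * r * cos b) + sin b * (2 * r - cos b - r ^ 2 * cos b)
                 = (b * (1 + T ^ 2) + T - (T * cos b - sin b) * (cos b + T * sin b)) * sin b ^ 2).
  { assert (D : (b * (1 + T ^ 2) + T - (T * cos b - sin b) * (cos b + T * sin b)) * sin b ^ 2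
                = b * (1 + r ^ 2 - 2 * r * cos b) + sin b * (2 * r - cos b - r ^ 2 * cos b)
                  + (sin b * sin b + cos b * cos b - 1) * (sin b * cos b + T * sin b ^ 2 + b))
      by (unfold r; ring).
    rewrite Hp in D. lra. }
  transitivity ((b * (1 + r ^ 2 - 2 * r * cos b) + sin b * (2 * r - cos b - r ^ 2 * cos b))
                / sin b ^ 2); [field; lra |].
  rewrite Hnum, <- inv_c_sqr. field. lra.
Qed.

Lemma dH_formula_geodesic : dH_formula v d = d / c.
Proof.
  pose proof sin_b_pos. pose proof c_pos. pose proof T_sin_b.
  pose proof (sin2_cos2 b) as Hp. unfold Rsqr in Hp.
  unfold dH_formula, half_angle_ratio. destruct (Req_EM_T d 0) as [| _]; [lra |]. fold b.
  replace (1 + v - 2 * sqrt v * cos b) with ((sin b / c) ^ 2).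
  - rewrite sqrt_pow2 by (apply Rdiv_le_0_compat; lra). field. lra.
  - replace ((sin b / c) ^ 2) with (sin b ^ 2 * / c ^ 2) by (field; lra).
    rewrite inv_c_sqr, <- sqrt_v_sqr at 1.
    replace (sqrt v) with (T * sin b + cos b) by (rewrite T_sin_b; ring). nra.
Qed.

Lemma dH_le_dH_formula_geodesic : Rbar_le (dH 0 1 (f_formula v d) v) (dH_formula v d).
Proof.
  pose proof c_pos. pose proof al_b_range. pose proof al_range.
  assert (Hb : 0 < b) by (unfold b; lra).
  set (gx := fun t => (t * b + (sin (2 * al) - sin (2 * (al - t * b))) / 2) / c ^ 2).
  set (gv := fun t => cos (al - t * b) ^ 2 / c ^ 2).
  set (dgx := fun t => b * (1 + cos (2 * (al - t * b))) / c ^ 2).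
  set (dgv := fun t => 2 * b * cos (al - t * b) * sin (al - t * b) / c ^ 2).
  assert (Dx : forall t, is_derive gx t (dgx t))
    by (intros t; unfold gx, dgx; auto_derive; [lra | unfold Rminus; field; lra]).
  assert (Dv : forall t, is_derive gv t (dgv t))
    by (intros t; unfold gv, dgv; auto_derive; [lra | unfold Rminus; field; lra]).
  assert (Hcos : forall t, 0 <= t <= 1 -> 0 < cos (al - t * b))
    by (intros t Ht; apply cos_gt_0; nra).
  rewrite dH_formula_geodesic, <- (hlength_of_speed gx gv dgx dgv (d / c) Dx Dv).
  - apply dH_le_hlength, (admissible_of_derive gx gv dgx dgv); auto.
    + unfold gx. replace (al - 0 * b) with al by ring. field. lra.
    + unfold gv. replace (al - 0 * b) with al by ring. fold c. field. lra.
    + unfold gx. replace (al - 1 * b) with (al - b) by ring.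
      rewrite f_formula_geodesic, !sin_2a. fold c. field. lra.
    + unfold gv. replace (al - 1 * b) with (al - b) by ring.
      rewrite cos_al_b. replace ((c * sqrt v) ^ 2 / c ^ 2) with (sqrt v ^ 2) by (field; lra).
      apply sqrt_v_sqr.
    + intros t. apply continuous_of_ex_derive. unfold dgx. auto_derive. lra.
    + intros t. apply continuous_of_ex_derive. unfold dgv. auto_derive. lra.
    + intros t Ht. apply Rdiv_lt_0_compat; apply pow_lt; [apply Hcos, Ht | lra].
  - intros t Ht. unfold gv, dgx, dgv.
    pose proof (Hcos t ltac:(lra)). set (p := al - t * b) in *.
    pose proof (sin2_cos2 p) as Hsc. unfold Rsqr in Hsc.
    replace (((b * (1 + cos (2 * p)) / c ^ 2) ^ 2 + (2 * b * cos p * sin p / c ^ 2) ^ 2)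
             / (cos p ^ 2 / c ^ 2)) with ((d / c) ^ 2).
    + apply sqrt_pow2, Rlt_le, Rdiv_lt_0_compat; lra.
    + rewrite cos_2a_cos. unfold b. field_simplify; [| lra..].
      replace (sin p ^ 2) with (1 - cos p ^ 2) by nra. field. lra.
Qed.

Lemma Bplus_c : Bplus c = PI / 2 - al + c * sin al.
Proof. pose proof al_range. apply Bplus_cos. lra. Qed.

Lemma Bminus_c : Bminus c = PI / 2 - al - c * sin al.
Proof. pose proof al_range. apply Bminus_cos. lra. Qed.

Lemma calib_geodesic_over : al <= b ->
  calib_crit (sqrt v) c = f_formula v d /\ calib_value (f_formula v d) (sqrt v) c = d / c.
Proof.
  intros Hab. pose proof al_b_range. pose proof c_pos.
  set (t := b - al).
  assert (Ht : 0 <= t <= PI / 2) by (unfold t; lra).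
  assert (Hcos : cos (al - b) = cos t)
    by (unfold t; replace (al - b) with (- (b - al)) by ring; apply cos_neg).
  assert (Hsin : sin (al - b) = - sin t)
    by (unfold t; replace (al - b) with (- (b - al)) by ring; apply sin_neg).
  assert (Hcr : c * sqrt v = cos t) by (rewrite <- cos_al_b; exact Hcos).
  unfold calib_crit, calib_value.
  rewrite f_formula_geodesic, Hcr, Bplus_c, Bminus_c, Bplus_cos, Bminus_cos, Hsin, Hcos by lra.
  unfold t, b. split; field; lra.
Qed.

Lemma calib_geodesic_mono : b <= al ->
  f_formula v d <= calib_crit (sqrt v) c /\
  d / c <= calib_value (f_formula v d) (sqrt v) c /\
  c * (f_formula v d - 0) + RInt (calib_density c) 1 v = d / c.
Proof.
  intros Hab. pose proof al_b_range. pose proof al_range. pose proof c_pos.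
  set (t := al - b).
  assert (Ht : 0 <= t <= PI / 2) by (unfold t; lra).
  assert (Hcr : c * sqrt v = cos t) by (rewrite <- cos_al_b; reflexivity).
  assert (0 <= sin t) by (apply sin_ge_0; lra).
  assert (sin t <= t) by (apply sin_le_id; lra).
  assert (0 <= cos t <= 1) by (split; [apply cos_ge_0; lra | apply COS_bound]).
  assert (c <= 1) by (apply COS_bound).
  assert (0 <= sin t * cos t <= t) by nra.
  assert (c ^ 2 * v <= 1).
  { rewrite <- sqrt_v_sqr. replace (c ^ 2 * sqrt v ^ 2) with ((c * sqrt v) ^ 2) by ring.
    rewrite Hcr. nra. }
  unfold calib_crit, calib_value.
  rewrite (RInt_calib_density c 1 v) by nra.
  rewrite sqrt_1, Rmult_1_r, f_formula_geodesic, Hcr, Bplus_c, Bminus_c,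
    Bplus_cos, Bminus_cos by lra.
  fold t. repeat split.
  - unfold Rdiv. apply Rmult_le_compat_r; [apply Rlt_le, Rinv_0_lt_compat, pow_lt; lra |].
    unfold t in *. lra.
  - replace (c * ((b + sin al * c - sin t * cos t) / c ^ 2) + (PI - (PI / 2 - al + c * sin al)
               - (PI / 2 - t + cos t * sin t)) / c)
      with ((d + 2 * (t - sin t * cos t)) / c) by (unfold t, b; field; lra).
    unfold Rdiv. apply Rmult_le_compat_r; [apply Rlt_le, Rinv_0_lt_compat; lra |]. nra.
  - unfold t, b. field. lra.
Qed.

(* If the geodesic passes its apex (al <= b), [calib_value] is minimal at c. Otherwise
   either the curve stays below height 1 / c^2 and calibrating with a = c gives d / c,
   or it climbs higher and [calib_value] decreases from 1 / sqrt h to c. *)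
Lemma dH_formula_le_hlength_geodesic gx gv :
  admissible gx gv 0 1 (f_formula v d) v -> dH_formula v d <= hlength gx gv.
Proof.
  intros Hadm. pose proof c_pos. pose proof sqrt_v_ge_1. pose proof cos_al_b.
  destruct (curve_height_max gv) as [tm [Htm Hmax]];
    [intros t Ht; apply (admissible_regular gx gv 0 1 (f_formula v d) v Hadm t Ht) |].
  pose proof Hadm as (_ & Hv0 & _ & Hv1 & _).
  pose proof (hlength_ge_calib_value gx gv (f_formula v d) v tm Hadm Htm Hmax) as Hcal.
  set (h := gv tm) in *.
  assert (Hh1 : 1 <= h) by (rewrite <- Hv0; apply Hmax; lra).
  assert (Hhv : v <= h) by (rewrite <- Hv1; apply Hmax; lra).
  assert (Hsh : sqrt v <= sqrt h) by (apply sqrt_le_1_alt; lra).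
  assert (Hsh2 : sqrt h * sqrt h = h) by (apply sqrt_sqrt; lra).
  set (a := 1 / sqrt h) in *.
  assert (Ha : 0 < a) by (unfold a; apply Rdiv_lt_0_compat; lra).
  assert (Hah : a ^ 2 * h = 1).
  { unfold a. replace ((1 / sqrt h) ^ 2 * h) with (h / (sqrt h * sqrt h)) by (field; lra).
    rewrite Hsh2. field. lra. }
  assert (Har : a * sqrt v <= 1)
    by (unfold a; apply (Rmult_le_reg_r (sqrt h)); [lra |]; field_simplify; lra).
  assert (Hcr : c * sqrt v <= 1) by (rewrite <- cos_al_b; apply COS_bound).
  assert (Hmin : (a <= c -> f_formula v d <= calib_crit (sqrt v) c) ->
                 (c < a -> calib_crit (sqrt v) c <= f_formula v d) ->
                 calib_value (f_formula v d) (sqrt v) c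
                 <= calib_value (f_formula v d) (sqrt v) a)
    by (apply calib_value_ge; lra).
  rewrite dH_formula_geodesic.
  destruct (Rle_dec al b) as [Hover | Hmono].
  - destruct (calib_geodesic_over Hover) as [Hcrit Hval].
    assert (Hv2 := Hmin ltac:(lra) ltac:(lra)). lra.
  - destruct (calib_geodesic_mono ltac:(lra)) as (Hcrit & Hval & Hdirect).
    destruct (Rle_dec c a) as [Hca | Hac].
    + assert (Hbelow : forall t, 0 <= t <= 1 -> c ^ 2 * gv t <= 1).
      { intros t Ht. rewrite <- Hah. pose proof (Hmax t Ht).
        assert (0 < gv t) by apply (admissible_regular gx gv 0 1 (f_formula v d) v Hadm t Ht).
        apply Rle_trans with (a ^ 2 * gv t); [apply Rmult_le_compat_r |
                                              apply Rmult_le_compat_l]; nra. }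
      pose proof (hlength_ge_calibration gx gv 0 1 (f_formula v d) v c Hadm ltac:(lra)
                    Hbelow 1 ltac:(lra)) as C.
      rewrite Hv1, RInt_point in C. unfold zero in C; simpl in C. lra.
    + assert (Hv2 := Hmin ltac:(lra) ltac:(lra)). lra.
Qed.

End Geodesic.

Lemma hlength_ge_vertical gx gv v :
  admissible gx gv 0 1 0 v -> 2 * (sqrt v - 1) <= hlength gx gv.
Proof.
  intros Hadm. pose proof Hadm as (_ & _ & _ & Hv1 & _).
  assert (Hv : 0 < v) by (rewrite <- Hv1; apply (admissible_regular gx gv 0 1 0 v Hadm); lra).
  pose proof (hlength_ge_calibration gx gv 0 1 0 v 0 Hadm ltac:(lra)
                ltac:(intros; lra) 1 ltac:(lra)) as C.
  rewrite Hv1, RInt_point, RInt_calib_density_0, sqrt_1 in C by lra.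
  unfold zero in C; simpl in C. lra.
Qed.

Lemma dH_eq_dH_formula v d : 1 <= v -> 0 <= d < 2 * PI ->
  dH 0 1 (f_fun v d) v = dH_formula v d.
Proof.
  intros Hv Hd. apply Rbar_le_antisym.
  - destruct (Req_dec d 0) as [-> | Hd0].
    + rewrite f_fun_0, dH_formula_0 by lra. apply dH_le_vertical, Hv.
    + rewrite f_fun_formula by lra. apply dH_le_dH_formula_geodesic; lra.
  - apply (Glb_Rbar_correct (fun L => exists gx gv,
      admissible gx gv 0 1 (f_fun v d) v /\ L = hlength gx gv)).
    intros L (gx & gv & Hadm & ->). simpl.
    destruct (Req_dec d 0) as [-> | Hd0].
    + rewrite f_fun_0 in Hadm. rewrite dH_formula_0 by lra. apply hlength_ge_vertical, Hadm.
    + rewrite f_fun_formula in Hadm by lra.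
      apply dH_formula_le_hlength_geodesic; [lra | lra | exact Hadm].
Qed.

Theorem lemma2p8 (x1 v1 x2 v2 : R) :
  0 <= v1 -> 0 <= v2 ->
  0 <= delta x1 v1 -> delta x1 v1 <= delta x2 v2 -> delta x2 v2 < 2 * PI ->
  1 <= v1 -> v1 <= v2 ->
  Rbar_le (dH 0 1 x1 v1) (dH 0 1 x2 v2).
Proof.
  intros _ _ Hd1 Hd12 Hd2 Hv1 Hv12.
  rewrite <- (delta_spec x1 v1), <- (delta_spec x2 v2) by lra.
  rewrite !dH_eq_dH_formula by lra.
  apply dH_formula_mono; lra.
Qed.
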